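(* Let $G$ be a closed, connected, self adjoint, noncompact subgroup of $GL(n,\mathbb{R})$ and let $v\in\mathbb{R}^n$ be a nonzero minimal vector such that $G(v)$ is unbounded. Then $0<\lambda_X(v)\le 1$ for every $X\in\widetilde{\mathfrak{P}_v}$ with $|X|=1$.
   Context: $\langle A,B\rangle=\mathrm{trace}(AB^t)$, $|A|^2=\langle A,A\rangle$. $v$ is minimal if $|g(v)|\ge|v|$ for all $g\in G$. $\mathfrak{G}$ is the Lie algebra of $G$, $\mathfrak{K}$ and $\mathfrak{P}$ its skew-symmetric and symmetric elements, $\mathfrak{G}_v=\{X\in\mathfrak{G}:X(v)=0\}$, $\widetilde{\mathfrak{P}_v}=(\mathfrak{K}+\mathfrak{G}_v)^\perp\subset\mathfrak{P}$. For nonzero $X\in\mathfrak{P}$, $\lambda_X(v)$ is the largest eigenvalue of $X$ such that $v$ has a nonzero component in the corresponding eigenspace. *)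

From Stdlib Require Import Reals List.
From mathcomp Require Import all_boot.

Set Implicit Arguments.
Unset Strict Implicit.

Local Open Scope R_scope.

Definition mat (n : nat) := 'I_n -> 'I_n -> R.
Definition vec (n : nat) := 'I_n -> R.

Definition rsum (n : nat) (f : 'I_n -> R) : R := \big[Rplus/R0]_(i < n) f i.

Definition mid (n : nat) : mat n := fun i j => if i == j then 1 else 0.
Arguments mid n : clear implicits.
Definition mmul (n : nat) (A B : mat n) : mat n :=
  fun i j => rsum (fun k => A i k * B k j).
Definition madd (n : nat) (A B : mat n) : mat n := fun i j => A i j + B i j.
Definition mopp (n : nat) (A : mat n) : mat n := fun i j => - A i j.
Definition mscale (n : nat) (t : R) (A : mat n) : mat n := fun i j => t * A i j.
Definition mtr (n : nat) (A : mat n) : mat n := fun i j => A j i.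
Definition mtrace (n : nat) (A : mat n) : R := rsum (fun i => A i i).

Definition mdot (n : nat) (A B : mat n) : R := mtrace (mmul A (mtr B)).
Definition mnorm (n : nat) (A : mat n) : R := sqrt (mdot A A).

Definition vzero (n : nat) : vec n := fun _ => 0.
Arguments vzero n : clear implicits.
Definition vscale (n : nat) (t : R) (v : vec n) : vec n := fun i => t * v i.
Definition mapply (n : nat) (A : mat n) (v : vec n) : vec n :=
  fun i => rsum (fun k => A i k * v k).
Definition vdot (n : nat) (v w : vec n) : R := rsum (fun i => v i * w i).
Definition vnorm (n : nat) (v : vec n) : R := sqrt (vdot v v).

Fixpoint mpow (n : nat) (A : mat n) (k : nat) : mat n :=
  match k with O => mid n | S k' => mmul A (mpow A k') end.

Definition is_mexp (n : nat) (X E : mat n) : Prop :=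
  forall i j, Un_cv (fun N => sum_f_R0 (fun k => mpow X k i j / INR (Factorial.fact k)) N)
                    (E i j).

Definition invertible (n : nat) (A : mat n) : Prop :=
  exists B, mmul A B = mid n /\ mmul B A = mid n.

Definition subgroup_GL (n : nat) (G : mat n -> Prop) : Prop :=
  (forall g, G g -> invertible g) /\
  G (mid n) /\
  (forall g h, G g -> G h -> G (mmul g h)) /\
  (forall g, G g -> exists h, G h /\ mmul g h = mid n /\ mmul h g = mid n).

Definition closed_in_GL (n : nat) (G : mat n -> Prop) : Prop :=
  forall (s : nat -> mat n) (A : mat n),
    (forall k, G (s k)) ->
    (forall i j, Un_cv (fun k => s k i j) (A i j)) ->
    invertible A -> G A.

Definition mopen (n : nat) (U : mat n -> Prop) : Prop :=
  forall A, U A -> exists eps, 0 < eps /\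
    forall B, mnorm (madd B (mopp A)) < eps -> U B.

Definition mconnected (n : nat) (S : mat n -> Prop) : Prop :=
  ~ exists U V : mat n -> Prop,
      mopen U /\ mopen V /\
      (forall A, S A -> U A \/ V A) /\
      (exists A, S A /\ U A) /\ (exists A, S A /\ V A) /\
      (forall A, S A -> U A -> V A -> False).

Definition mcompact (n : nat) (S : mat n -> Prop) : Prop :=
  forall (I : Type) (U : I -> mat n -> Prop),
    (forall i, mopen (U i)) ->
    (forall A, S A -> exists i, U i A) ->
    exists l : list I, forall A, S A -> exists i, In i l /\ U i A.

Definition self_adjoint (n : nat) (G : mat n -> Prop) : Prop :=
  forall g, G g -> G (mtr g).

Definition lie_alg (n : nat) (G : mat n -> Prop) (X : mat n) : Prop :=
  forall t : R, exists E, is_mexp (mscale t X) E /\ G E.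

Definition frakK (n : nat) (G : mat n -> Prop) (X : mat n) : Prop :=
  lie_alg G X /\ mtr X = mopp X.
Definition frakP (n : nat) (G : mat n -> Prop) (X : mat n) : Prop :=
  lie_alg G X /\ mtr X = X.
Definition stab_alg (n : nat) (G : mat n -> Prop) (v : vec n) (X : mat n) : Prop :=
  lie_alg G X /\ mapply X v = vzero n.
Definition Ptilde (n : nat) (G : mat n -> Prop) (v : vec n) (X : mat n) : Prop :=
  frakP G X /\
  forall K Z, frakK G K -> stab_alg G v Z -> mdot X (madd K Z) = 0.

Definition minimal (n : nat) (G : mat n -> Prop) (v : vec n) : Prop :=
  forall g, G g -> vnorm v <= vnorm (mapply g v).

Definition orbit_unbounded (n : nat) (G : mat n -> Prop) (v : vec n) : Prop :=
  ~ exists M : R, forall g, G g -> vnorm (mapply g v) <= M.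

(* l is an eigenvalue of X such that v has a nonzero component in the
   l-eigenspace (i.e. v is not orthogonal to that eigenspace) *)
Definition eigen_comp (n : nat) (X : mat n) (v : vec n) (l : R) : Prop :=
  exists w : vec n, mapply X w = vscale l w /\ vdot v w <> 0.

Definition is_lambda (n : nat) (X : mat n) (v : vec n) (l : R) : Prop :=
  eigen_comp X v l /\ forall m, eigen_comp X v m -> m <= l.

(* Write v = e_1 + ... + e_k with nonzero, mutually orthogonal eigenvectors e_i of the
   symmetric matrix X, of eigenvalues lam_i; then lambda_X(v) = max lam_i, and
   lam_i^2 <= |X|^2 = 1.  If all lam_i were <= 0, then exp X lies in G and
   |exp(X) v|^2 = sum exp(2 lam_i) |e_i|^2 <= |v|^2, so minimality of v forces every
   lam_i = 0, i.e. X v = 0.  Then X lies in G_v, and X being orthogonal to K + G_v gives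
   |X|^2 = 0.
   The decomposition is built inside an X-stable subspace U by induction on its rank; an
   eigenvector in U is found at the supremum S of the Rayleigh quotient on U, because the
   positive semidefinite form of S - X cannot be injective on U. *)

From Stdlib Require Import Reals.
From mathcomp Require Import all_boot all_algebra.
From mathcomp Require Import boolp classical_sets reals Rstruct lra.

Set Implicit Arguments.
Unset Strict Implicit.
Unset Printing Implicit Defensive.

Import order.Order.TTheory GRing.Theory Num.Theory.
Local Open Scope ring_scope.

Section RealDot.
Variable R : realFieldType.

Definition dot n (u w : 'rV[R]_n) : R := (u *m w^T) 0 0.

Lemma dotE n (u w : 'rV[R]_n) : dot u w = \sum_i u 0 i * w 0 i.
Proof. by rewrite /dot mxE; apply: eq_bigr => i _; rewrite mxE. Qed.

Lemma dotC n (u w : 'rV[R]_n) : dot u w = dot w u.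
Proof. by rewrite !dotE; apply: eq_bigr => i _; rewrite mulrC. Qed.

Lemma dotDl n (u u' w : 'rV[R]_n) : dot (u + u') w = dot u w + dot u' w.
Proof. by rewrite /dot mulmxDl mxE. Qed.

Lemma dotZl n a (u w : 'rV[R]_n) : dot (a *: u) w = a * dot u w.
Proof. by rewrite /dot -scalemxAl mxE. Qed.

Lemma dotNl n (u w : 'rV[R]_n) : dot (- u) w = - dot u w.
Proof. by rewrite /dot mulNmx mxE. Qed.

Lemma dotBl n (u u' w : 'rV[R]_n) : dot (u - u') w = dot u w - dot u' w.
Proof. by rewrite dotDl dotNl. Qed.

Lemma dotZr n a (u w : 'rV[R]_n) : dot u (a *: w) = a * dot u w.
Proof. by rewrite dotC dotZl dotC. Qed.

Lemma dotBr n (u w w' : 'rV[R]_n) : dot u (w - w') = dot u w - dot u w'.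
Proof. by rewrite dotC dotBl -!(dotC u). Qed.

Lemma dot_suml n k (f : 'I_k -> 'rV[R]_n) w :
  dot (\sum_i f i) w = \sum_i dot (f i) w.
Proof. by rewrite /dot mulmx_suml summxE. Qed.

Lemma dot_sumr n k (f : 'I_k -> 'rV[R]_n) u :
  dot u (\sum_i f i) = \sum_i dot u (f i).
Proof. by rewrite dotC dot_suml; apply: eq_bigr => i _; rewrite dotC. Qed.

Lemma dot_mulmx_sym n (A : 'M[R]_n) (u w : 'rV[R]_n) :
  A^T = A -> dot (u *m A) w = dot u (w *m A).
Proof. by move=> sA; rewrite /dot trmx_mul sA mulmxA. Qed.

Lemma mulmxtr_eq0 n (u w : 'rV[R]_n) : (u *m w^T == 0) = (dot u w == 0).
Proof.
apply/eqP/eqP => uw0; first by rewrite /dot uw0 mxE.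
by apply/rowP => i; rewrite ord1 [RHS]mxE; exact: uw0.
Qed.

Lemma dot_ge0 n (u : 'rV[R]_n) : 0 <= dot u u.
Proof. by rewrite dotE sumr_ge0 // => i _; rewrite -expr2 sqr_ge0. Qed.

Lemma dot_eq0 n (u : 'rV[R]_n) : (dot u u == 0) = (u == 0).
Proof.
apply/idP/eqP => [|->]; last by rewrite /dot mul0mx mxE.
rewrite dotE psumr_eq0 => [/allP u0|i _]; last by rewrite -expr2 sqr_ge0.
apply/rowP => i; have /implyP := u0 i (mem_index_enum i).
by rewrite mxE mulf_eq0 orbb => /(_ isT)/eqP.
Qed.

Lemma dot_gt0 n (u : 'rV[R]_n) : u != 0 -> 0 < dot u u.
Proof. by move=> u0; rewrite lt0r dot_eq0 u0 dot_ge0. Qed.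

Lemma dot_CauchySchwarz n (u w : 'rV[R]_n) : dot u w ^+ 2 <= dot u u * dot w w.
Proof.
have [->|u0] := eqVneq u 0; first by rewrite /dot !mul0mx mxE expr0n mul0r.
have uu := dot_gt0 u0.
have := dot_ge0 (dot u u *: w - dot u w *: u).
rewrite dotBl !dotBr !dotZl !dotZr (dotC w u).
nra.
Qed.

Lemma mxtrace_mulmxT n (A : 'M[R]_n) :
  \tr (A *m A^T) = \sum_j dot (col j A)^T (col j A)^T.
Proof.
rewrite mxtrace_mulC /mxtrace; apply: eq_bigr => j _.
by rewrite mxE dotE; apply: eq_bigr => i _; rewrite !mxE.
Qed.

Lemma mxtrace_mulmxT_ge0 n (A : 'M[R]_n) : 0 <= \tr (A *m A^T).
Proof. by rewrite mxtrace_mulmxT sumr_ge0 // => j _; exact: dot_ge0. Qed.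

Lemma dot_mulmx_le n (A : 'M[R]_n) (w : 'rV[R]_n) :
  dot (w *m A) (w *m A) <= dot w w * \tr (A *m A^T).
Proof.
have wAj j : (w *m A) 0 j = dot w (col j A)^T.
  by rewrite mxE dotE; apply: eq_bigr => i _; rewrite !mxE.
rewrite mxtrace_mulmxT mulr_sumr [dot _ _]dotE; apply: ler_sum => j _.
by rewrite wAj -expr2 dot_CauchySchwarz.
Qed.

Lemma eigenvalue_sqr_le n (A : 'M[R]_n) (e : 'rV[R]_n) a :
  e != 0 -> e *m A = a *: e -> a ^+ 2 <= \tr (A *m A^T).
Proof.
move=> e0 eA; have := dot_mulmx_le A e.
by rewrite eA dotZl dotZr mulrA -expr2 mulrC ler_pM2l // dot_gt0.
Qed.

Lemma rayleigh_bound n (A : 'M[R]_n) (y : 'rV[R]_n) :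
  `|dot (y *m A) y| <= (\tr (A *m A^T) + 1) * dot y y.
Proof.
have := dot_CauchySchwarz (y *m A) y; have := dot_mulmx_le A y.
have := mxtrace_mulmxT_ge0 A; have := dot_ge0 y.
move: (dot (y *m A) y) (dot (y *m A) (y *m A)) (dot y y) (\tr _) => q z d t.
move=> d0 t0 zt qz; have s0 : 0 <= (t + 1) * d by nra.
have : q ^+ 2 <= ((t + 1) * d) ^+ 2 by nra.
move: ((t + 1) * d) s0 => s s0 qs.
by rewrite ler_norml; apply/andP; split; nra.
Qed.

Lemma psd_mulmx_dot_le n (U F : 'M[R]_n) (C : R) :
  F^T = F -> stablemx U F -> 0 < C ->
  (forall y, (y <= U)%MS -> 0 <= dot (y *m F) y) ->
  (forall y, (y <= U)%MS -> dot (y *m F) y <= C * dot y y) ->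
  forall y, (y <= U)%MS -> dot (y *m F) (y *m F) <= C * dot (y *m F) y.
Proof.
move=> sF sUF C0 F_ge0 F_le y yU.
(* Positivity at the test vector [y - C^-1 *: y *m F] yields [C^-1 |yF|^2 <= <yF, y>]. *)
set z := y *m F; have zU : (z <= U)%MS by exact: submx_trans (submxMr F yU) sUF.
have wU : (y - C^-1 *: z <= U)%MS by rewrite addmx_sub ?eqmx_opp ?scalemx_sub.
have := F_ge0 _ wU.
rewrite mulmxBl -scalemxAl -/z dotBl !dotBr !dotZl !dotZr.
rewrite [dot (z *m F) y](dot_mulmx_sym _ _ sF) -/z.
have := F_le z zU; have := dot_ge0 z; have CV : C^-1 * C = 1 by rewrite mulVf ?gt_eqF.
have CV0 : 0 < C^-1 by rewrite invr_gt0.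
move: (dot z z) (dot (z *m F) z) (dot z y) C^-1 CV CV0 => Z Pz P c cC c0 Z0 PzZ.
have cPz : c * (c * Pz) <= c * Z.
  by rewrite -[X in _ <= c * X]mul1r -cC -mulrA !ler_pM2l.
move=> P_ge; have cZ : c * Z <= P by lra.
have := ler_wpM2l (ltW C0) cZ; rewrite mulrA (mulrC C) cC mul1r; lra.
Qed.

Lemma mulmx_coercive n (U F : 'M[R]_n) :
  (forall y : 'rV[R]_n, (y <= U)%MS -> y *m F = 0 -> y = 0) ->
  exists2 K, 0 < K &
    forall y : 'rV[R]_n, (y <= U)%MS -> dot y y <= K * dot (y *m F) (y *m F).
Proof.
move=> injF; set B := row_base U.
have BF_free : row_free (B *m F).
  rewrite -kermx_eq0; apply/rowV0P => u /sub_kermxP; rewrite mulmxA => uBF.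
  have /eqP : u *m B = 0.
    by apply: injF => //; rewrite (submx_trans (submxMl _ _)) ?eq_row_base.
  by rewrite mulmx_free_eq0 ?row_base_free // => /eqP.
have [N BFN] := row_freeP BF_free.
exists (\tr ((N *m B) *m (N *m B)^T) + 1); first by rewrite ltr_wpDl ?mxtrace_mulmxT_ge0.
move=> y; rewrite -(eq_row_base U) => /submxP[a ->].
have {1 2}-> : a *m B = (a *m B *m F) *m (N *m B).
  by rewrite (mulmxA _ N B) -(mulmxA a B F) -(mulmxA a (B *m F) N) BFN mulmx1.
apply: le_trans (dot_mulmx_le _ _) _; rewrite mulrC ler_wpM2r ?dot_ge0 //.
by rewrite lerDl.
Qed.

(* Components of [v] that vanish are omitted, so the [lam i] are exactly the eigenvalues
   of [X] in whose eigenspace [v] has a nonzero component. *)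
Definition eigendecomposition n k (X : 'M[R]_n) (v : 'rV[R]_n)
    (lam : 'I_k -> R) (e : 'I_k -> 'rV[R]_n) : Prop :=
  [/\ forall i, e i *m X = lam i *: e i, forall i, e i != 0,
      forall i j, i != j -> dot (e i) (e j) = 0 & v = \sum_i e i].

Lemma eigendecomposition_cons n k (X : 'M[R]_n) v (lam : 'I_k -> R) e a f :
  eigendecomposition X v lam e -> f *m X = a *: f -> f != 0 ->
  (forall i, dot f (e i) = 0) ->
  eigendecomposition X (f + v) (fun i => oapp lam a (unlift ord0 i))
    (fun i => oapp e f (unlift ord0 i)).
Proof.
move=> [eX e0 orth ->] fX f0 fe; split.
- by move=> i; case: (unliftP ord0 i) => [j|] _ /=; rewrite ?eX.
- by move=> i; case: (unliftP ord0 i) => [j|] _ /=; rewrite ?e0.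
- move=> i j; case: (unliftP ord0 i) => [i'|] ->; case: (unliftP ord0 j) => [j'|] ->;
    rewrite ?liftK ?unlift_none ?eqxx //=.
  + by move=> ij; apply: orth; apply: contraNneq ij => ->.
  + by rewrite dotC fe.
- by rewrite big_ord_recl unlift_none; congr (_ + _); apply: eq_bigr => i _; rewrite liftK.
Qed.

Lemma eigendecomposition_dot n k (X : 'M[R]_n) v (lam : 'I_k -> R) e i :
  eigendecomposition X v lam e -> dot v (e i) = dot (e i) (e i).
Proof.
case=> _ _ orth ->; rewrite dot_suml (bigD1 i) //= big1 ?addr0 // => j ji.
exact: orth.
Qed.

Lemma eigendecomposition_eigenvalue n k (X : 'M[R]_n) v (lam : 'I_k -> R) e
    (w : 'rV[R]_n) m :
  X^T = X -> eigendecomposition X v lam e -> w *m X = m *: w -> dot v w != 0 ->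
  exists i, lam i = m.
Proof.
move=> sX [eX _ _ ->] wX; rewrite dot_suml => vw0.
have /existsP[i ew0] : [exists i, dot (e i) w != 0].
  apply: contraR vw0 => /existsPn ew0; apply/eqP/big1 => i _.
  exact/eqP/negbNE/ew0.
exists i; apply: (mulIf ew0).
by rewrite -dotZl -eX dot_mulmx_sym // wX dotZr.
Qed.

Lemma mulmx_sum_eigen n k (A : 'M[R]_n) (e : 'I_k -> 'rV[R]_n) (c : 'I_k -> R) :
  (forall i, e i *m A = c i *: e i) -> (\sum_i e i) *m A = \sum_i c i *: e i.
Proof. by move=> eA; rewrite mulmx_suml; apply: eq_bigr => i _; exact: eA. Qed.

Lemma dot_sum_orthogonal n k (e : 'I_k -> 'rV[R]_n) (a b : 'I_k -> R) :
  (forall i j, i != j -> dot (e i) (e j) = 0) ->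
  dot (\sum_i a i *: e i) (\sum_i b i *: e i) = \sum_i a i * b i * dot (e i) (e i).
Proof.
move=> orth; rewrite dot_suml; apply: eq_bigr => i _.
rewrite dotZl dot_sumr (bigD1 i) //= big1 ?addr0 => [|j ji].
  by rewrite dotZr mulrA.
by rewrite dotZr orth ?mulr0 // eq_sym.
Qed.

Lemma orthogonal_sum_contraction n k (e : 'I_k -> 'rV[R]_n) (c : 'I_k -> R) :
  (forall i j, i != j -> dot (e i) (e j) = 0) -> (forall i, c i ^+ 2 <= 1) ->
  dot (\sum_i e i) (\sum_i e i) <= dot (\sum_i c i *: e i) (\sum_i c i *: e i) ->
  forall i, e i != 0 -> c i ^+ 2 = 1.
Proof.
move=> orth c_le1 le_sum i ei0.
have t_ge0 j : 0 <= (1 - c j ^+ 2) * dot (e j) (e j).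
  by rewrite mulr_ge0 ?subr_ge0 ?dot_ge0.
have sum_t0 : \sum_j (1 - c j ^+ 2) * dot (e j) (e j) = 0.
  apply/eqP; rewrite eq_le sumr_ge0 // andbT.
  move: le_sum.
  have -> : \sum_j e j = \sum_j 1 *: e j by apply: eq_bigr => j _; rewrite scale1r.
  rewrite !dot_sum_orthogonal // -subr_ge0 -sumrB -oppr_le0 -sumrN.
  by under eq_bigr do rewrite mulr1 -expr2 -mulrBl -mulNr opprB.
have /eqP := psumr_eq0P (P := xpredT) (fun j _ => t_ge0 j) sum_t0 (i := i) isT.
by rewrite mulf_eq0 dot_eq0 (negbTE ei0) orbF subr_eq0 => /eqP.
Qed.
End RealDot.

Section SymmetricSpectrum.
Variable R : realType.

Lemma rayleigh_sup n (X U : 'M[R]_n) : U != 0 ->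
  exists S, (forall y, (y <= U)%MS -> dot (y *m X) y <= S * dot y y) /\
    forall T, (forall y, (y <= U)%MS -> y != 0 -> dot (y *m X) y <= T * dot y y) ->
    S <= T.
Proof.
move=> /rowV0Pn[y0 y0U y0n].
pose Q (y : 'rV[R]_n) := dot (y *m X) y.
pose E : set R := fun r => exists2 y, (y <= U)%MS && (y != 0) & r = Q y / dot y y.
have E_sup : has_sup E.
  split; first by exists (Q y0 / dot y0 y0), y0; rewrite ?y0U.
  exists (\tr (X *m X^T) + 1) => _ [y /andP[_ yn] ->].
  rewrite ler_pdivrMr ?dot_gt0 //; exact: le_trans (ler_norm _) (rayleigh_bound _ _).
exists (sup E); split => [y yU|T QT].
  have [->|yn] := eqVneq y 0; first by rewrite /dot !mul0mx !mxE mulr0.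
  rewrite -ler_pdivrMr ?dot_gt0 //; apply: sup_upper_bound E_sup _ _.
  by exists y; rewrite ?yU.
apply: ge_sup; first by case: E_sup.
by move=> _ [y /andP[yU yn] ->]; rewrite ler_pdivrMr ?dot_gt0 ?QT.
Qed.

Lemma sym_stable_eigenvector n (X U : 'M[R]_n) :
  X^T = X -> stablemx U X -> U != 0 ->
  exists2 e : 'rV[R]_n, (e <= U)%MS & e != 0 /\ exists a, e *m X = a *: e.
Proof.
move=> sX sUX Un0; have [S [Q_le S_le]] := rayleigh_sup X Un0.
pose F := S%:M - X.
have QF y : dot (y *m F) y = S * dot y y - dot (y *m X) y.
  by rewrite mulmxBr mul_mx_scalar dotBl dotZl.
have sF : F^T = F by rewrite linearB /= tr_scalar_mx sX.
have sUF : stablemx U F.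
  by rewrite mulmxBr mul_mx_scalar addmx_sub ?eqmx_opp ?scalemx_sub.
have F_ge0 y : (y <= U)%MS -> 0 <= dot (y *m F) y by move=> yU; rewrite QF subr_ge0 Q_le.
pose C := `|S| + \tr (X *m X^T) + 1.
have C0 : 0 < C by rewrite /C -addrA ltr_wpDl ?ltr_wpDl ?mxtrace_mulmxT_ge0.
have F_le y : (y <= U)%MS -> dot (y *m F) y <= C * dot y y.
  move=> _; rewrite QF /C -addrA mulrDl; apply: lerD.
    by rewrite ler_wpM2r ?dot_ge0 ?ler_norm.
  by have := rayleigh_bound X y; rewrite ler_norml lerNl => /andP[].
have F_psd := psd_mulmx_dot_le sF sUF C0 F_ge0 F_le.
(* If [S - X] were injective on [U], coercivity would bound the Rayleigh quotient on [U]
   by [S - (K * C)^-1]. *)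
have [[y /andP[yU yn] yF0]|noker] :=
    pselect (exists2 y : 'rV[R]_n, (y <= U)%MS && (y != 0) & y *m F = 0).
  exists y => //; split => //; exists S; apply/eqP.
  by move: yF0; rewrite mulmxBr mul_mx_scalar => /eqP; rewrite subr_eq0 eq_sym.
have [K K0 F_coercive] : exists2 K, 0 < K &
    forall y, (y <= U)%MS -> dot y y <= K * dot (y *m F) (y *m F).
  apply: mulmx_coercive => y yU yF0; apply/eqP/negPn/negP => yn.
  by apply: noker; exists y; rewrite ?yU.
have KC0 : 0 < K * C by rewrite mulr_gt0.
have KCV0 : 0 < (K * C)^-1 by rewrite invr_gt0.
suff : S <= S - (K * C)^-1 by lra.
apply: S_le => y yU _; have := F_coercive y yU.
have := ler_wpM2l (ltW K0) (F_psd y yU); rewrite QF mulrA => le1 le2.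
have : dot y y / (K * C) <= S * dot y y - dot (y *m X) y.
  by rewrite ler_pdivrMr // mulrC; exact: le_trans le2 le1.
by rewrite mulrBl; lra.
Qed.

Lemma sym_eigendecomposition n (X U : 'M[R]_n) (v : 'rV[R]_n) :
  X^T = X -> stablemx U X -> (v <= U)%MS ->
  exists k (lam : 'I_k -> R) (e : 'I_k -> 'rV[R]_n),
    (forall i, e i <= U)%MS /\ eigendecomposition X v lam e.
Proof.
move=> sX; have [r] := ubnP (\rank U); elim: r U v => // r IH U v.
rewrite ltnS => rkU sUX vU.
have [U0|Un0] := eqVneq U 0.
  exists 0%N, (fun=> 0), (fun=> 0); split; first by case.
  split => [[]|[]|[]|] //.
  by move: vU; rewrite U0 submx0 big_ord0 => /eqP.
have [e0 e0U [e0n [a e0X]]] := sym_stable_eigenvector sX sUX Un0.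
have e0e0 := dot_gt0 e0n.
pose U' := (U :&: kermx e0^T)%MS.
have sub_U' w : (w <= U')%MS = (w <= U)%MS && (dot w e0 == 0).
  by rewrite sub_capmx sub_kermx mulmxtr_eq0.
have sU'X : stablemx U' X.
  apply/row_subP => i; rewrite row_mul sub_U'.
  have /[!sub_U'] /andP[wU /eqP we0] := row_sub i U'.
  rewrite (submx_trans (submxMr X wU) sUX) /=.
  by rewrite dot_mulmx_sym // e0X dotZr we0 mulr0.
have rkU' : (\rank U' < r)%N.
  apply: leq_trans (rank_ltmx _) rkU; rewrite ltmxE capmxSl /=.
  apply: contraT => /negPn/(submx_trans e0U); rewrite sub_U' => /andP[_].
  by rewrite gt_eqF.
pose c := dot v e0 / dot e0 e0.
have v'U' : (v - c *: e0 <= U')%MS.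
  rewrite sub_U' addmx_sub ?eqmx_opp ?scalemx_sub //=.
  by rewrite dotBl dotZl /c mulfVK ?(gt_eqF e0e0) // subrr.
have [k [lam [e [eU' dec]]]] := IH U' _ rkU' sU'X v'U'.
have eU i : (e i <= U)%MS by exact: submx_trans (eU' i) (capmxSl _ _).
have [c0|cn0] := eqVneq c 0.
  by exists k, lam, e; move: dec; rewrite c0 scale0r subr0.
exists k.+1, (fun i => oapp lam a (unlift ord0 i)),
  (fun i => oapp e (c *: e0) (unlift ord0 i)).
split; first by move=> i; case: (unliftP ord0 i) => [j|] _ /=; rewrite ?scalemx_sub.
rewrite -[v](subrK (c *: e0)) addrC; apply: eigendecomposition_cons dec _ _ _.
- by rewrite -scalemxAl e0X !scalerA mulrC.
- by rewrite scaler_eq0 negb_or cn0.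
- move=> i; have /[!sub_U'] /andP[_ /eqP ee0] := eU' i.
  by rewrite dotZl dotC ee0 mulr0.
Qed.
End SymmetricSpectrum.

(* From here on [R] is again the Stdlib type of reals, a [realType] through [Rstruct]. *)
Definition rowv n (v : vec n) : 'rV[R]_n := \row_i v i.
Definition mxv n (A : mat n) : 'M[R]_n := \matrix_(i, j) A i j.

Lemma rowv_inj n : injective (@rowv n).
Proof. by move=> v w /rowP vw; apply: funext => i; have := vw i; rewrite !mxE. Qed.

Lemma rowvK n (u : 'rV[R]_n) : rowv (fun i => u 0 i) = u.
Proof. by apply/rowP => i; rewrite mxE. Qed.

Lemma rowv_vzero n : rowv (vzero n) = 0.
Proof. by apply/rowP => i; rewrite !mxE. Qed.

Lemma rowv_vscale n c (v : vec n) : rowv (vscale c v) = c *: rowv v.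
Proof. by apply/rowP => i; rewrite !mxE. Qed.

Lemma rowv_mapply n (A : mat n) (v : vec n) : rowv (mapply A v) = rowv v *m (mxv A)^T.
Proof. by apply/rowP => i; rewrite !mxE; apply: eq_bigr => k _; rewrite !mxE mulrC. Qed.

Lemma vdotE n (v w : vec n) : vdot v w = dot (rowv v) (rowv w).
Proof. by rewrite dotE; apply: eq_bigr => i _; rewrite !mxE. Qed.

Lemma mxv_mmul n (A B : mat n) : mxv (mmul A B) = mxv A *m mxv B.
Proof. by apply/matrixP => i j; rewrite !mxE; apply: eq_bigr => k _; rewrite !mxE. Qed.

Lemma mxv_mid n : mxv (mid n) = 1%:M.
Proof. by apply/matrixP => i j; rewrite !mxE /mid; case: eqP. Qed.

Lemma mxv_mscale n c (A : mat n) : mxv (mscale c A) = c *: mxv A.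
Proof. by apply/matrixP => i j; rewrite !mxE. Qed.

Lemma mxv_sym n (X : mat n) : mtr X = X -> (mxv X)^T = mxv X.
Proof. by move=> sX; apply/matrixP => i j; rewrite !mxE -{1}sX. Qed.

Lemma mdotE n (A : mat n) : mdot A A = \tr (mxv A *m (mxv A)^T).
Proof.
rewrite /mdot /mtrace /rsum; apply: eq_bigr => i _; rewrite !mxE.
by apply: eq_bigr => k _; rewrite !mxE.
Qed.

Lemma mapply_mmul n (A B : mat n) w : mapply (mmul A B) w = mapply A (mapply B w).
Proof. by apply: rowv_inj; rewrite !rowv_mapply mxv_mmul trmx_mul mulmxA. Qed.

Lemma mapply_mpow_eigen n (A : mat n) w r k :
  mapply A w = vscale r w -> mapply (mpow A k) w = vscale (r ^+ k) w.
Proof.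
move=> Aw; elim: k => [|k IH] /=; apply: rowv_inj.
  by rewrite rowv_mapply mxv_mid trmx1 mulmx1 rowv_vscale scale1r.
rewrite mapply_mmul IH rowv_mapply !rowv_vscale -scalemxAl -rowv_mapply Aw.
by rewrite rowv_vscale scalerA -exprSr.
Qed.

Lemma Un_cv_const (c : R) : Un_cv (fun _ => c) c.
Proof. by move=> eps eps0; exists 0%N => m _; rewrite /Rdist RminusE subrr Rabs_R0. Qed.

Lemma Un_cv_big (I : Type) (r : seq I) (f : nat -> I -> R) (l : I -> R) :
  (forall j, Un_cv (fun N => f N j) (l j)) ->
  Un_cv (fun N => \sum_(j <- r) f N j) (\sum_(j <- r) l j).
Proof.
move=> fl; elim: r => [|j r IH].
  by rewrite big_nil; under [fun N => _]funext do rewrite big_nil; exact: Un_cv_const.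
by rewrite big_cons; under [fun N => _]funext do rewrite big_cons; exact: CV_plus.
Qed.

Lemma sum_f_R0_big (f : nat -> R) N : sum_f_R0 f N = \sum_(k < N.+1) f k.
Proof. by elim: N => [|N IH] /=; rewrite ?big_ord1 // big_ord_recr IH. Qed.

Lemma mexp_eigen n (A E : mat n) (w : vec n) (r : R) :
  is_mexp A E -> mapply A w = vscale r w -> mapply E w = vscale (exp r) w.
Proof.
move=> AE Aw; apply: funext => i.
have Akw k : \sum_j mpow A k i j * w j = r ^+ k * w i.
  by have /(congr1 (fun u => u i)) := mapply_mpow_eigen k Aw.
pose a k j := mpow A k i j / INR (Factorial.fact k).
have cv_Ew : Un_cv (fun N => \sum_j sum_f_R0 (a ^~ j) N * w j) (mapply E w i).
  by apply: Un_cv_big => j; apply: CV_mult (AE i j) (Un_cv_const _).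
apply: UL_sequence cv_Ew _.
have -> : (fun N => \sum_j sum_f_R0 (a ^~ j) N * w j) =
    (fun N => sum_f_R0 (fun k => Rinv (INR (Factorial.fact k)) * pow r k) N * w i).
  apply: funext => N; rewrite !sum_f_R0_big mulr_suml.
  under eq_bigr do rewrite sum_f_R0_big mulr_suml.
  rewrite exchange_big /=; apply: eq_bigr => k _.
  under eq_bigr do rewrite /a mulrAC.
  by rewrite -mulr_suml Akw RpowE mulrC mulrA.
by apply: CV_mult (Un_cv_const _); rewrite /exp; case: (exist_exp r).
Qed.

Lemma is_mexp_zero n (Z : mat n) : (forall i j, Z i j = 0) -> is_mexp Z (mid n).
Proof.
move=> Z0 i j; apply: Un_cv_ext (Un_cv_const (mid n i j)) => N.
rewrite sum_f_R0_big big_ord_recl big1 ?addr0 => [|k _]; first by rewrite RdivE divr1.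
by rewrite RdivE /= /mmul /rsum big1 => [|l _]; [exact: mul0r | rewrite Z0; exact: mul0r].
Qed.

Lemma frakK_zero n (G : mat n -> Prop) : G (mid n) -> frakK G (fun _ _ => 0).
Proof.
move=> G1; split; last by apply: funext => i; apply: funext => j; rewrite /mopp RoppE oppr0.
move=> t; exists (mid n); split => //.
by apply: is_mexp_zero => i j; rewrite /mscale RmultE mulr0.
Qed.

Lemma exp_sqr_le1 (x : R) : x <= 0 -> exp x ^+ 2 <= 1.
Proof.
move=> x_le0; have e0 : 0 < exp x by apply/RltP/exp_pos.
have : exp x <= 1.
  have [->|x_lt0] := eqVneq x 0; first by rewrite expR0.
  by rewrite -expR0; apply/RleP/Rlt_le/exp_increasing/RltP; rewrite lt_neqAle x_lt0.
by move=> e1; nra.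
Qed.

Lemma eigen_comp_decomposition n (X : mat n) (v : vec n) k (lam : 'I_k -> R) e m :
  mtr X = X -> eigendecomposition (mxv X) (rowv v) lam e ->
  eigen_comp X v m <-> exists i, lam i = m.
Proof.
move=> /mxv_sym sX dec; have [eX en _ _] := dec; split.
  move=> [w [Xw vw]].
  have Xw' : rowv w *m mxv X = m *: rowv w by rewrite -sX -rowv_mapply Xw rowv_vscale.
  by apply: (eigendecomposition_eigenvalue sX dec Xw'); rewrite -vdotE; exact/eqP.
move=> [i <-]; exists (fun j => e i 0 j); split.
  by apply: rowv_inj; rewrite rowv_mapply rowv_vscale rowvK sX eX.
by rewrite vdotE rowvK (eigendecomposition_dot _ dec); apply/eqP; rewrite dot_eq0.
Qed.

Lemma vnorm_le_dot n (v w : vec n) :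
  Rle (vnorm v) (vnorm w) -> dot (rowv v) (rowv v) <= dot (rowv w) (rowv w).
Proof. by move/RleP; rewrite /vnorm !RsqrtE !vdotE ler_sqrt // dot_ge0. Qed.

Lemma minimal_nonpos_mapply_eq0 n (G : mat n -> Prop) (v : vec n) (X : mat n)
    k (lam : 'I_k -> R) e :
  minimal G v -> lie_alg G X -> mtr X = X ->
  eigendecomposition (mxv X) (rowv v) lam e -> (forall i, lam i <= 0) ->
  mapply X v = vzero n.
Proof.
move=> vmin XG /mxv_sym sX [eX en orth v_sum] lam_le0.
have [E [XE GE]] := XG 1.
have eE i : e i *m (mxv E)^T = exp (lam i) *: e i.
  have Xe : mapply (mscale 1 X) (fun j => e i 0 j) = vscale (lam i) (fun j => e i 0 j).
    apply: rowv_inj; rewrite rowv_mapply mxv_mscale scale1r sX rowvK eX.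
    by rewrite rowv_vscale rowvK.
  by have /(congr1 (@rowv n)) := mexp_eigen XE Xe; rewrite rowv_mapply rowv_vscale rowvK.
have := vnorm_le_dot (vmin E GE).
rewrite rowv_mapply v_sum (mulmx_sum_eigen eE) => le_v.
have lam0 i : lam i = 0.
  have := orthogonal_sum_contraction orth (fun j => exp_sqr_le1 (lam_le0 j)) le_v (en i).
  move/eqP; rewrite sqrp_eq1 -?expR0 => [/eqP/exp_inv //|].
  by apply/ltW/RltP/exp_pos.
apply: rowv_inj; rewrite rowv_mapply rowv_vzero sX v_sum (mulmx_sum_eigen eX).
by rewrite big1 // => i _; rewrite lam0 scale0r.
Qed.

Lemma is_lambda_decomposition n (X : mat n) (v : vec n) k (lam : 'I_k -> R) e :
  mtr X = X -> v <> vzero n -> eigendecomposition (mxv X) (rowv v) lam e ->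
  exists2 i0, is_lambda X v (lam i0) & forall i, lam i <= lam i0.
Proof.
move=> Xsym v_neq0 dec; have lamP := eigen_comp_decomposition _ Xsym dec.
have k_gt0 : (0 < k)%N.
  case: k lam e dec {lamP} => // lam e [_ _ _ v0]; case: v_neq0.
  by apply: rowv_inj; rewrite v0 big_ord0 rowv_vzero.
case: (arg_maxP lam (P := xpredT) (i0 := Ordinal k_gt0) isT) => i0 _ lam_max.
exists i0 => [|i]; last exact: lam_max.
split; first by apply/lamP; exists i0.
by move=> m /lamP[i <-]; apply/RleP/lam_max.
Qed.

Lemma eigenvalue_le_mnorm n (X : mat n) (e : 'rV[R]_n) a :
  e != 0 -> e *m mxv X = a *: e -> a <= mnorm X.
Proof.
move=> en eX; rewrite /mnorm RsqrtE mdotE.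
apply: le_trans (ler_norm a) _; rewrite -sqrtr_sqr ler_sqrt ?mxtrace_mulmxT_ge0 //.
exact: eigenvalue_sqr_le en eX.
Qed.

Lemma Ptilde_annihilator_eq0 n (G : mat n -> Prop) (v : vec n) (X : mat n) :
  G (mid n) -> Ptilde G v X -> mapply X v = vzero n -> mdot X X = 0.
Proof.
move=> G1 [[XG _] Xperp] Xv0; have := Xperp _ X (frakK_zero G1) (conj XG Xv0).
suff -> : madd (fun _ _ => 0) X = X by [].
by apply: funext => i; apply: funext => j; rewrite /madd RplusE add0r.
Qed.

Local Open Scope R_scope.

Theorem proposition7p6 (n : nat) (G : mat n -> Prop) (v : vec n) :
  subgroup_GL G -> closed_in_GL G -> mconnected G -> self_adjoint G ->
  ~ mcompact G ->
  v <> vzero n -> minimal G v -> orbit_unbounded G v ->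
  forall X : mat n, Ptilde G v X -> mnorm X = 1 ->
  exists l : R, is_lambda X v l /\ 0 < l /\ l <= 1.
Proof.
move=> [_ [G1 _]] _ _ _ _ v_neq0 vmin _ X XP X1.
have [[XG Xsym] _] := XP.
have [k [lam [e [_ dec]]]] :=
  sym_eigendecomposition (mxv_sym Xsym) (submx1 _) (submx1 (rowv v)).
have [i0 lam_i0 lam_max] := is_lambda_decomposition Xsym v_neq0 dec.
have [eX en _ _] := dec.
exists (lam i0); split; [exact: lam_i0 | split].
- apply: Rnot_le_lt => /RleP lam_le0.
  have Xv0 := minimal_nonpos_mapply_eq0 vmin XG Xsym dec
    (fun i => le_trans (lam_max i) lam_le0).
  move: X1; rewrite /mnorm (Ptilde_annihilator_eq0 G1 XP Xv0) sqrt_0.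
  by move/esym/R1_neq_R0.
- by rewrite -X1; apply/RleP/(eigenvalue_le_mnorm (en i0) (eX i0)).
Qed.
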